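(* For a positive integer $d$, a vector $y\in\mathbb{R}^d$ and a positive integer $q$, let $$\mathbf{R}_q(y) = \mathbf{E}\Big(\sum_{i\neq j} y_i y_j r_i r_j\Big)^q,$$ where $r_1,\ldots,r_d$ are independent Rademacher random variables (each $\pm1$ with probability $1/2$) and the sum runs over ordered pairs $(i,j)$, $i\ne j$, in $\{1,\ldots,d\}$. Let $x\in\mathbb{R}^n$ be nonzero, let $K=\|x\|_0$ be its number of nonzero coordinates, and let $$x^* = \Big(\tfrac{\|x\|_2}{\sqrt{K}},\ldots,\tfrac{\|x\|_2}{\sqrt{K}}\Big)\in\mathbb{R}^K.$$ Then for every positive integer $q$, $$\mathbf{R}_q(x)\le \mathbf{R}_q(x^* ),$$ and moreover $$\mathbf{R}_q(x^* ) = \|x\|_2^{2q}\,\mathbf{E}\big(\bar B^2-1\big)^q,$$ where $\bar B = \frac{B-K/2}{\sqrt{K/4}}$ and $B\sim\mathsf{Binom}(K,1/2)$. *)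

From HB Require Import structures.
From mathcomp Require Import all_boot all_order all_algebra.
From mathcomp Require Import reals.
Set Implicit Arguments. Unset Strict Implicit. Unset Printing Implicit Defensive.
Import Order.TTheory GRing.Theory Num.Theory.
Local Open Scope ring_scope.

Definition rsign (R : realType) (b : bool) : R := if b then 1 else -1.

(* Expectation over d independent Rademacher variables: uniform average over
   all 2^d sign patterns. *)
Definition rad_E (R : realType) (d : nat) (f : {ffun 'I_d -> bool} -> R) : R :=
  (2 ^+ d)^-1 * \sum_(s : {ffun 'I_d -> bool}) f s.

Definition Rq (R : realType) (d : nat) (y : 'rV[R]_d) (q : nat) : R :=
  rad_E (fun s : {ffun 'I_d -> bool} =>
    (\sum_(i < d) \sum_(j < d | i != j)
        y 0 i * y 0 j * rsign R (s i) * rsign R (s j)) ^+ q).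

Definition l0norm (R : realType) (n : nat) (x : 'rV[R]_n) : nat :=
  #|[set i : 'I_n | x 0 i != 0]|.

Definition l2norm (R : realType) (n : nat) (x : 'rV[R]_n) : R :=
  Num.sqrt (\sum_(i < n) x 0 i ^+ 2).

Definition xstar (R : realType) (n : nat) (x : 'rV[R]_n) : 'rV[R]_(l0norm x) :=
  const_mx (l2norm x / Num.sqrt (l0norm x)%:R).

Definition binomE (R : realType) (K : nat) (f : nat -> R) : R :=
  \sum_(k < K.+1) ('C(K, k))%:R / 2 ^+ K * f k.

Definition Bbar (R : realType) (K k : nat) : R :=
  (k%:R - K%:R / 2) / Num.sqrt (K%:R / 4).

From HB Require Import structures.
From mathcomp Require Import all_boot all_order all_algebra.
From mathcomp Require Import reals.
From mathcomp Require Import ring.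
Set Implicit Arguments. Unset Strict Implicit. Unset Printing Implicit Defensive.
Import Order.TTheory GRing.Theory Num.Theory.
Local Open Scope ring_scope.

(* Write [Rq y q] as [2^-n] times the sum over all sign patterns of
   [(Z ^+ 2 - |y|^2) ^+ q] with [Z = sum_k y_k r_k]; flipping signs lets us
   assume [y >= 0].  Fix two coordinates [i], [j] and sum over the four values
   of [(r_i, r_j)]: what remains is a combination of products [W^a V^b] of the
   linear and quadratic chaoses [W], [V] of the other coordinates.  For fixed
   [y_i^2 + y_j^2] the coefficients increase with [y_i y_j], and since [y >= 0]
   each product is a nonnegative combination of sign monomials, so its sum over
   sign patterns is nonnegative.  Hence the moment does not decrease when
   [(y_i, y_j)] is replaced by a pair with the same sum of squares and a larger
   product.  Repeatedly moving one coordinate to the mean square [|x|^2 / K]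
   flattens [|x|] to [x^*] on its support.  For a flat vector, [Z] is
   [a (2 B - K)] with [B] binomial, which gives the formula. *)

Section PairCoefficients.
Variable R : realDomainType.

Lemma exprN_add_mono (t t' : R) m : 0 <= t -> t <= t' ->
  t ^+ m + (- t) ^+ m <= t' ^+ m + (- t') ^+ m.
Proof.
move=> t0 tt'; rewrite (exprNn t) (exprNn t') -signr_odd.
case: (odd m); first by rewrite expr1 !mulN1r !subrr.
by rewrite expr0 !mul1r lerD // lerXn2r // nnegrE (le_trans t0).
Qed.

Lemma shift_exprN_add_mono (s t t' : R) k l : 0 <= s -> 0 <= t -> t <= t' ->
  (s + t) ^+ k * t ^+ l + (s - t) ^+ k * (- t) ^+ l <=
  (s + t') ^+ k * t' ^+ l + (s - t') ^+ k * (- t') ^+ l.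
Proof.
move=> s0 t0 tt'.
have expand u : (s + u) ^+ k * u ^+ l + (s - u) ^+ k * (- u) ^+ l =
    \sum_(i < k.+1) s ^+ (k - i) *+ 'C(k, i) * (u ^+ (i + l) + (- u) ^+ (i + l)).
  rewrite !exprDn !mulr_suml -big_split /=; apply: eq_bigr => i _.
  by rewrite (exprD u) (exprD (- u)); ring.
rewrite !expand; apply: ler_sum => i _.
by rewrite ler_wpM2l ?mulrn_wge0 ?exprn_ge0 ?exprN_add_mono.
Qed.

Definition pair_coef j l (a b : R) :=
  (2 * (a + b)) ^+ j * (2 * a * b) ^+ l
  + (2 * (a - b)) ^+ j * (- (2 * a * b)) ^+ l
  + (- (2 * (a - b))) ^+ j * (- (2 * a * b)) ^+ l
  + (- (2 * (a + b))) ^+ j * (2 * a * b) ^+ l.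

Lemma pair_coef_odd j l a b : odd j -> pair_coef j l a b = 0.
Proof.
by move=> oj; rewrite /pair_coef !(exprNn (2 * _)) -signr_odd oj expr1; ring.
Qed.

Lemma pair_coef_double k l (a b : R) : pair_coef k.*2 l a b = 2 * 4 ^+ k *
  ((a ^+ 2 + b ^+ 2 + 2 * a * b) ^+ k * (2 * a * b) ^+ l +
   (a ^+ 2 + b ^+ 2 - 2 * a * b) ^+ k * (- (2 * a * b)) ^+ l).
Proof.
rewrite /pair_coef -muln2 mulnC !exprM !sqrrN.
have -> : (2 * (a + b)) ^+ 2 = 4 * (a ^+ 2 + b ^+ 2 + 2 * a * b) by ring.
have -> : (2 * (a - b)) ^+ 2 = 4 * (a ^+ 2 + b ^+ 2 - 2 * a * b) by ring.
by rewrite !exprMn; ring.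
Qed.

(* For even [j] the coefficient is an even polynomial in [2 a b] whose
   coefficients are nonnegative polynomials in [a ^+ 2 + b ^+ 2]. *)
Lemma pair_coef_mono j l (a b a' b' : R) :
  a ^+ 2 + b ^+ 2 = a' ^+ 2 + b' ^+ 2 -> 0 <= a * b -> a * b <= a' * b' ->
  pair_coef j l a b <= pair_coef j l a' b'.
Proof.
move=> sq ab0 abab'.
have [oj | ej] := boolP (odd j); first by rewrite !pair_coef_odd.
rewrite -[j]odd_double_half (negbTE ej) add0n !pair_coef_double sq.
rewrite ler_wpM2l ?mulr_ge0 ?exprn_ge0 //.
apply: shift_exprN_add_mono; first by rewrite addr_ge0 ?sqr_ge0.
  by rewrite -mulrA mulr_ge0.
by rewrite -!mulrA ler_wpM2l.
Qed.

Lemma exprD3n (c d w v : R) q : (c + d * w + v) ^+ q =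
  \sum_(j < q.+1) \sum_(l < (q - j).+1)
     ('C(q, j) * 'C(q - j, l))%:R * (d ^+ j * c ^+ l) * (w ^+ j * v ^+ (q - j - l)).
Proof.
have -> : c + d * w + v = v + c + d * w by ring.
rewrite exprDn; apply: eq_bigr => j _.
rewrite exprDn mulr_suml -sumrMnl; apply: eq_bigr => l _.
by rewrite natrM exprMn; ring.
Qed.

Definition pair_chaos (a b w v e e' : R) :=
  2 * a * b * e * e' + 2 * (a * e + b * e') * w + v.

Definition pair_average q (a b w v : R) :=
  \sum_(j < q.+1) \sum_(l < (q - j).+1)
     ('C(q, j) * 'C(q - j, l))%:R * pair_coef j l a b * (w ^+ j * v ^+ (q - j - l)).

Lemma pair_chaos_signs q (a b w v : R) :
  pair_chaos a b w v 1 1 ^+ q + pair_chaos a b w v 1 (-1) ^+ q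
  + pair_chaos a b w v (-1) 1 ^+ q + pair_chaos a b w v (-1) (-1) ^+ q =
  pair_average q a b w v.
Proof.
have -> : pair_chaos a b w v 1 1 = 2 * a * b + 2 * (a + b) * w + v.
  by rewrite /pair_chaos; ring.
have -> : pair_chaos a b w v 1 (-1) = - (2 * a * b) + 2 * (a - b) * w + v.
  by rewrite /pair_chaos; ring.
have -> : pair_chaos a b w v (-1) 1 = - (2 * a * b) + - (2 * (a - b)) * w + v.
  by rewrite /pair_chaos; ring.
have -> : pair_chaos a b w v (-1) (-1) = 2 * a * b + - (2 * (a + b)) * w + v.
  by rewrite /pair_chaos; ring.
rewrite !exprD3n -!big_split; apply: eq_bigr => j _.
by rewrite -!big_split; apply: eq_bigr => l _; rewrite /pair_coef /=; ring.
Qed.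

End PairCoefficients.

Lemma sum_eq0_neg_pos (R : realDomainType) (I : finType) (A : {pred I}) (d : I -> R) k0 :
  \sum_(k in A) d k = 0 -> k0 \in A -> d k0 != 0 ->
  (exists2 i, i \in A & d i < 0) /\ (exists2 j, j \in A & 0 < d j).
Proof.
move=> sd k0A dk0.
have ge0_eq0 (e : I -> R) : \sum_(k in A) e k = 0 ->
    (forall k, k \in A -> 0 <= e k) -> e k0 = 0.
  by move=> se e0; apply: (psumr_eq0P e0 se).
split.
  have [/exists_inP [i iA di] | /exists_inP none] := boolP [exists i in A, d i < 0].
    by exists i.
  case/eqP: dk0; apply: ge0_eq0 sd _ => k kA.
  by rewrite leNgt; apply/negP => dk; apply: none; exists k.
have [/exists_inP [j jA dj] | /exists_inP none] := boolP [exists j in A, 0 < d j].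
  by exists j.
case/eqP: dk0; apply/eqP; rewrite -oppr_eq0; apply/eqP.
apply: ge0_eq0 (fun k => - d k) _ _; first by rewrite sumrN sd oppr0.
by move=> k kA; rewrite oppr_ge0 leNgt; apply/negP => dk; apply: none; exists k.
Qed.

Lemma coef_1DX_exp (R : comNzRingType) K m : ((1 + 'X) ^+ K : {poly R})`_m = 'C(K, m)%:R.
Proof.
rewrite exprDn coef_sum.
under eq_bigr do rewrite expr1n mul1r coefMn coefXn.
have [mK | Km] := ltnP m K.+1; last first.
  rewrite bin_small // big1 // => i _.
  by rewrite gtn_eqF ?mul0rn // (leq_trans (ltn_ord i) Km).
rewrite (bigD1 (Ordinal mK)) //= eqxx big1 ?addr0 // => i /eqP ne.
by rewrite (_ : m == i = false) ?mul0rn //; apply/eqP => mi; apply/ne/val_inj.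
Qed.

Section SignCounting.
Variables (R : comNzRingType) (n : nat).
Local Notation signs := {ffun 'I_n -> bool}.
Implicit Types (A : {set 'I_n}).

Lemma sum_signs_Xn_card A :
  \sum_(s : signs) 'X^#|[set k in A | s k]| =
  (1 + 'X) ^+ #|A| * (2 ^+ (n - #|A|))%:P :> {poly R}.
Proof.
have Xn_card (s : signs) : 'X^#|[set k in A | s k]| =
    \prod_k (if (k \in A) && s k then 'X else 1) :> {poly R}.
  by rewrite -big_mkcond prodr_const; apply/congr2/eq_card => // k; rewrite inE.
under eq_bigr do rewrite Xn_card.
rewrite -(bigA_distr_bigA (fun k b => if (k \in A) && b then 'X else 1)) /=.
rewrite (bigID (mem A)) /=; congr (_ * _).
  by rewrite -prodr_const; apply: eq_bigr => k kA; rewrite big_bool /= kA addrC.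
have -> : (n - #|A|)%N = #|[pred k | k \notin A]|.
  by rewrite -{1}(card_ord n) -(cardC A) addKn.
rewrite -prodr_const rmorph_prod; apply: eq_bigr => k kA.
by rewrite big_bool /= (negbTE kA) rmorphD /= polyC1.
Qed.

Lemma sum_signs_card_eq A m :
  \sum_(s : signs) ((#|[set k in A | s k]| == m)%:R : R) =
  'C(#|A|, m)%:R * 2 ^+ (n - #|A|).
Proof.
have := congr1 (fun p : {poly R} => p`_m) (sum_signs_Xn_card A).
rewrite /= coef_sum coefMC coef_1DX_exp => <-.
by apply: eq_bigr => s _; rewrite coefXn eq_sym.
Qed.

Lemma sum_signs_card A (f : nat -> R) :
  \sum_(s : signs) f #|[set k in A | s k]| =
  2 ^+ (n - #|A|) * \sum_(m < #|A|.+1) 'C(#|A|, m)%:R * f m.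
Proof.
have card_le (B : {set 'I_n}) : (#|B| < n.+1)%N.
  by rewrite ltnS -[n in (_ <= n)%N]card_ord max_card.
transitivity (\sum_(s : signs) \sum_(m < n.+1)
    (#|[set k in A | s k]| == m)%:R * f m).
  apply: eq_bigr => s _.
  rewrite (bigD1 (Ordinal (card_le [set k in A | s k]))) //= eqxx mul1r.
  rewrite big1 ?addr0 // => m /eqP ne.
  by rewrite (_ : (_ == m :> nat) = false) ?mul0r //; apply/eqP => cm; apply/ne/val_inj.
rewrite exchange_big /= mulr_sumr.
rewrite (big_ord_widen _ (fun m => 2 ^+ (n - #|A|) * ('C(#|A|, m)%:R * f m)) (card_le A)).
rewrite [RHS]big_mkcond /=.
apply: eq_bigr => m _; rewrite -mulr_suml sum_signs_card_eq.
case: ltnP => [_ | Am]; first by rewrite mulrCA mulrA.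
by rewrite bin_small ?mul0r ?mulr0.
Qed.

End SignCounting.

Section SignPolynomials.
Variables (R : realType) (n : nat).
Local Notation signs := {ffun 'I_n -> bool}.

Definition sign_monomial (e : 'I_n -> nat) (s : signs) : R :=
  \prod_k rsign R (s k) ^+ e k.

(* Coefficients are written as squares, so their nonnegativity comes for free. *)
Definition nonneg_sign_poly (F : signs -> R) :=
  exists L : seq (R * ('I_n -> nat)),
    forall s, F s = \sum_(c <- L) c.1 ^+ 2 * sign_monomial c.2 s.

Lemma nonneg_sign_poly_ext F G :
  nonneg_sign_poly F -> F =1 G -> nonneg_sign_poly G.
Proof. by move=> [L HL] FG; exists L => s; rewrite -FG HL. Qed.

Lemma nonneg_sign_poly_cst c : 0 <= c -> nonneg_sign_poly (fun=> c).
Proof.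
move=> c0; exists [:: (Num.sqrt c, fun=> 0%N)] => s.
by rewrite big_seq1 /= sqr_sqrtr // /sign_monomial big1 ?mulr1 // => k _; rewrite expr0.
Qed.

Lemma nonneg_sign_poly_rsign k : nonneg_sign_poly (fun s => rsign R (s k)).
Proof.
exists [:: (1, fun l => (l == k : nat))] => s.
rewrite big_seq1 /= expr1n mul1r /sign_monomial (bigD1 k) //= eqxx expr1.
by rewrite big1 ?mulr1 // => l /negbTE ->; rewrite expr0.
Qed.

Lemma nonneg_sign_polyD F G :
  nonneg_sign_poly F -> nonneg_sign_poly G -> nonneg_sign_poly (fun s => F s + G s).
Proof. by move=> [L1 H1] [L2 H2]; exists (L1 ++ L2) => s; rewrite big_cat /= H1 H2. Qed.

Lemma sign_monomialM e1 e2 s :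
  sign_monomial e1 s * sign_monomial e2 s = sign_monomial (fun k => e1 k + e2 k)%N s.
Proof. by rewrite -big_split; apply: eq_bigr => k _; rewrite exprD. Qed.

Lemma nonneg_sign_polyM F G :
  nonneg_sign_poly F -> nonneg_sign_poly G -> nonneg_sign_poly (fun s => F s * G s).
Proof.
move=> [L1 H1] [L2 H2].
exists [seq (c.1 * d.1, fun k => (c.2 k + d.2 k)%N) | c <- L1, d <- L2] => s.
rewrite /= H1 H2 big_allpairs_dep /= mulr_suml; apply: eq_bigr => c _.
rewrite mulr_sumr; apply: eq_bigr => d _ /=.
by rewrite -sign_monomialM exprMn mulrACA.
Qed.

Lemma nonneg_sign_polyX F m :
  nonneg_sign_poly F -> nonneg_sign_poly (fun s => F s ^+ m).
Proof.
move=> HF; elim: m => [|m IH].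
  by apply: nonneg_sign_poly_ext (nonneg_sign_poly_cst ler01) _ => s; rewrite expr0.
by apply: nonneg_sign_poly_ext (nonneg_sign_polyM HF IH) _ => s; rewrite /= exprS.
Qed.

Lemma nonneg_sign_poly_sum (I : Type) (r : seq I) (P : pred I) (F : I -> signs -> R) :
  (forall i, P i -> nonneg_sign_poly (F i)) ->
  nonneg_sign_poly (fun s => \sum_(i <- r | P i) F i s).
Proof.
move=> HF; elim: r => [|i r IH].
  by apply: nonneg_sign_poly_ext (nonneg_sign_poly_cst (lexx 0)) _ => s; rewrite big_nil.
case Pi: (P i); last by apply: nonneg_sign_poly_ext IH _ => s; rewrite big_cons Pi.
apply: nonneg_sign_poly_ext (nonneg_sign_polyD (HF i Pi) IH) _ => s.
by rewrite big_cons Pi.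
Qed.

(* The sum factors over the coordinates, and each factor is 0 or 2. *)
Lemma sum_sign_monomial_ge0 e : 0 <= \sum_(s : signs) sign_monomial e s.
Proof.
rewrite /sign_monomial -(bigA_distr_bigA (fun k b => rsign R b ^+ e k)) /=.
apply: prodr_ge0 => k _; rewrite big_bool /= /rsign expr1n -signr_odd.
by case: (odd (e k)); rewrite ?expr0 ?expr1 ?subrr ?addr_ge0.
Qed.

Lemma sum_nonneg_sign_poly_ge0 F : nonneg_sign_poly F -> 0 <= \sum_(s : signs) F s.
Proof.
move=> [L HL]; under eq_bigr do rewrite HL.
rewrite exchange_big /=; apply: sumr_ge0 => c _.
by rewrite -mulr_sumr mulr_ge0 ?sqr_ge0 ?sum_sign_monomial_ge0.
Qed.

End SignPolynomials.

Section ChaosSum.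
Variables (R : realType) (n : nat).
Local Notation signs := {ffun 'I_n -> bool}.
Local Notation sg b := (rsign R b).
Implicit Types (y : 'I_n -> R) (s : signs) (P : pred 'I_n).

Definition sign_sum_on P y s := \sum_(k | P k) y k * sg (s k).

Definition chaos_on P y s :=
  \sum_(i | P i) \sum_(j | P j && (i != j)) y i * y j * sg (s i) * sg (s j).

Definition sum_sq y := \sum_k y k ^+ 2.

Definition chaos_sum y q :=
  \sum_(s : signs) (sign_sum_on predT y s ^+ 2 - sum_sq y) ^+ q.

Lemma rsign_sqr b : sg b ^+ 2 = 1.
Proof. by case: b; rewrite /rsign ?sqrrN expr1n. Qed.

Lemma rsign_negb b : sg (~~ b) = - sg b.
Proof. by case: b; rewrite /rsign ?opprK. Qed.

Lemma sqr_sign_sum_on P y s :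
  sign_sum_on P y s ^+ 2 = \sum_(k | P k) y k ^+ 2 + chaos_on P y s.
Proof.
rewrite expr2 mulr_suml -big_split; apply: eq_bigr => i Pi /=.
rewrite mulr_sumr (bigD1 i) //= mulrACA -!expr2 rsign_sqr mulr1; congr (_ + _).
by apply: eq_big => [j | j _]; rewrite 1?eq_sym // mulrACA mulrA.
Qed.

Lemma eq_sign_sum_on P y s s' : {in P, s =1 s'} ->
  sign_sum_on P y s = sign_sum_on P y s'.
Proof. by move=> ss'; apply: eq_bigr => k Pk; rewrite ss'. Qed.

Lemma eq_chaos_on P y s s' : {in P, s =1 s'} -> chaos_on P y s = chaos_on P y s'.
Proof.
move=> ss'; apply: eq_bigr => i Pi; apply: eq_bigr => j /andP [Pj _].
by rewrite !ss'.
Qed.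

Lemma Rq_chaos_sum (x : 'rV[R]_n) q : Rq x q = (2 ^+ n)^-1 * chaos_sum (x 0) q.
Proof.
congr (_ * _); apply: eq_bigr => s _.
by rewrite sqr_sign_sum_on addrC addKr.
Qed.

Lemma eq_chaos_sum y y' q : y =1 y' -> chaos_sum y q = chaos_sum y' q.
Proof.
move=> yy'; rewrite /chaos_sum /sum_sq; apply: eq_bigr => s _.
by congr ((_ ^+ 2 - _) ^+ _); apply: eq_bigr => k _; rewrite yy'.
Qed.

Definition flip_signs (m : pred 'I_n) s : signs :=
  [ffun k => if m k then ~~ s k else s k].

Lemma flip_signsK m : involutive (flip_signs m).
Proof. by move=> s; apply/ffunP => k; rewrite !ffunE; case: (m k); rewrite ?negbK. Qed.

Lemma sum_flip_signs m (F : signs -> R) :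
  \sum_(s : signs) F (flip_signs m s) = \sum_(s : signs) F s.
Proof. by rewrite [RHS](reindex_inj (inv_inj (flip_signsK m))). Qed.

Lemma chaos_sum_abs y q : chaos_sum y q = chaos_sum (fun k => `|y k|) q.
Proof.
rewrite /chaos_sum -(sum_flip_signs (fun k => y k < 0)).
have -> : sum_sq (fun k => `|y k|) = sum_sq y.
  by apply: eq_bigr => k _; rewrite real_normK ?num_real.
apply: eq_bigr => s _; congr ((_ ^+ 2 - _) ^+ _); apply: eq_bigr => k _.
rewrite ffunE; case: ltrP => yk; last by rewrite ger0_norm.
by rewrite rsign_negb ltr0_norm // mulrN mulNr.
Qed.

End ChaosSum.

Section PairSmoothing.
Variables (R : realType) (n : nat).
Local Notation signs := {ffun 'I_n -> bool}.
Local Notation sg b := (rsign R b).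
Implicit Types (y : 'I_n -> R) (s : signs).

Lemma sum_signs_pair (i j : 'I_n) (H : bool -> bool -> signs -> R) : i != j ->
  (forall b b' s, H b b' (flip_signs (pred1 i) s) = H b b' s) ->
  (forall b b' s, H b b' (flip_signs (pred1 j) s) = H b b' s) ->
  4 * \sum_(s : signs) H (s i) (s j) s =
  \sum_(s : signs) (H true true s + H true false s + H false true s + H false false s).
Proof.
move=> ij Hi Hj; set X := \sum_(s : signs) _.
have flip_i s : flip_signs (pred1 i) s i = ~~ s i /\ flip_signs (pred1 i) s j = s j.
  by rewrite !ffunE /= eqxx [j == i]eq_sym (negbTE ij).
have flip_j s : flip_signs (pred1 j) s j = ~~ s j /\ flip_signs (pred1 j) s i = s i.
  by rewrite !ffunE /= eqxx (negbTE ij).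
have Xi : X = \sum_(s : signs) H (~~ s i) (s j) s.
  rewrite /X -(sum_flip_signs (pred1 i) (fun s => H (s i) (s j) s)).
  apply: eq_bigr => s _.
  by case: (flip_i s) => -> ->; rewrite Hi.
have Xj : X = \sum_(s : signs) H (s i) (~~ s j) s.
  rewrite /X -(sum_flip_signs (pred1 j) (fun s => H (s i) (s j) s)).
  apply: eq_bigr => s _.
  by case: (flip_j s) => -> ->; rewrite Hj.
have Xij : X = \sum_(s : signs) H (~~ s i) (~~ s j) s.
  rewrite Xj -(sum_flip_signs (pred1 i) (fun s => H (s i) (~~ s j) s)).
  apply: eq_bigr => s _.
  by case: (flip_i s) => -> ->; rewrite Hi.
have -> : 4 * X = X + X + X + X by ring.
rewrite {1}Xi {1}Xj {1}Xij /X -!big_split; apply: eq_bigr => s _ /=.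
by case: (s i); case: (s j) => /=; ring.
Qed.

Definition off_pair (i j : 'I_n) : pred 'I_n := fun k => (k != i) && (k != j).

Lemma chaos_pair_decomp y i j s : i != j ->
  sign_sum_on predT y s ^+ 2 - sum_sq y =
  pair_chaos (y i) (y j) (sign_sum_on (off_pair i j) y s)
    (chaos_on (off_pair i j) y s) (sg (s i)) (sg (s j)).
Proof.
move=> ij.
have split_ij (F : 'I_n -> R) :
    \sum_k F k = F i + F j + \sum_(k | off_pair i j k) F k.
  by rewrite (bigD1 i) //= (bigD1 j) 1?eq_sym //= addrA.
have chaos_off := sqr_sign_sum_on (off_pair i j) y s.
rewrite [sign_sum_on _ _ _]split_ij /sum_sq split_ij /pair_chaos.
rewrite -[chaos_on _ _ _](addKr (\sum_(k | off_pair i j k) y k ^+ 2)) -chaos_off.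
by rewrite /sign_sum_on; case: (s i); case: (s j); rewrite /rsign; ring.
Qed.

Lemma chaos_sum_pair_average y i j q : i != j ->
  4 * chaos_sum y q = \sum_(s : signs)
    pair_average q (y i) (y j) (sign_sum_on (off_pair i j) y s)
      (chaos_on (off_pair i j) y s).
Proof.
move=> ij.
pose H b b' s := pair_chaos (y i) (y j) (sign_sum_on (off_pair i j) y s)
    (chaos_on (off_pair i j) y s) (sg b) (sg b') ^+ q.
have off_flip m s : (forall k, off_pair i j k -> ~~ m k) ->
    {in off_pair i j, flip_signs m s =1 s}.
  by move=> hm k /hm mk; rewrite ffunE (negbTE mk).
have H_flip m : (forall k, off_pair i j k -> ~~ m k) ->
    forall b b' s, H b b' (flip_signs m s) = H b b' s.
  move=> hm b b' s; rewrite /H.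
  by rewrite (eq_sign_sum_on _ (off_flip m s hm)) (eq_chaos_on _ (off_flip m s hm)).
rewrite /chaos_sum (eq_bigr (fun s => H (s i) (s j) s)); last first.
  by move=> s _; rewrite (chaos_pair_decomp _ _ ij).
rewrite sum_signs_pair //; last 2 first.
- by apply: H_flip => k /andP [].
- by apply: H_flip => k /andP [].
by apply: eq_bigr => s _; rewrite /H -pair_chaos_signs.
Qed.

Lemma chaos_sum_pair_mono y y' i j q : i != j ->
  (forall k, 0 <= y k) -> (forall k, off_pair i j k -> y' k = y k) ->
  y' i ^+ 2 + y' j ^+ 2 = y i ^+ 2 + y j ^+ 2 ->
  0 <= y i * y j -> y i * y j <= y' i * y' j ->
  chaos_sum y q <= chaos_sum y' q.
Proof.
move=> ij y0 yy' sq ab0 abab'.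
set W := sign_sum_on (off_pair i j) y; set V := chaos_on (off_pair i j) y.
have W' : sign_sum_on (off_pair i j) y' =1 W.
  by move=> s; apply: eq_bigr => k /yy' ->.
have V' : chaos_on (off_pair i j) y' =1 V.
  by move=> s; apply: eq_bigr => k /yy' ->; apply: eq_bigr => l /andP [/yy' -> _].
rewrite -(@ler_pM2l _ 4) // !(chaos_sum_pair_average _ _ ij).
under [X in _ <= X]eq_bigr do rewrite W' V'.
rewrite -subr_ge0 -sumrB; apply: sum_nonneg_sign_poly_ge0.
have W_nonneg : nonneg_sign_poly W.
  apply: nonneg_sign_poly_sum => k _.
  exact: nonneg_sign_polyM (nonneg_sign_poly_cst _ (y0 k)) (nonneg_sign_poly_rsign _ k).
have V_nonneg : nonneg_sign_poly V.
  apply: nonneg_sign_poly_sum => k _; apply: nonneg_sign_poly_sum => l _.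
  apply: nonneg_sign_polyM _ (nonneg_sign_poly_rsign _ l).
  apply: nonneg_sign_polyM _ (nonneg_sign_poly_rsign _ k).
  exact/nonneg_sign_poly_cst/mulr_ge0.
apply: nonneg_sign_poly_ext (_ : nonneg_sign_poly (fun s =>
    \sum_(a < q.+1) \sum_(l < (q - a).+1) (('C(q, a) * 'C(q - a, l))%:R *
      (pair_coef a l (y' i) (y' j) - pair_coef a l (y i) (y j))) *
      (W s ^+ a * V s ^+ (q - a - l)))) _; last first.
  move=> s /=; rewrite -sumrB; apply: eq_bigr => a _.
  by rewrite -sumrB; apply: eq_bigr => l _; ring.
apply: nonneg_sign_poly_sum => a _; apply: nonneg_sign_poly_sum => l _.
apply: nonneg_sign_polyM; last exact: nonneg_sign_polyM (nonneg_sign_polyX _ _)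
  (nonneg_sign_polyX _ _).
apply/nonneg_sign_poly_cst/mulr_ge0 => //.
by rewrite subr_ge0 pair_coef_mono // sq.
Qed.

End PairSmoothing.

Section Flattening.
Variables (R : realType) (n : nat).
Implicit Types (A : {set 'I_n}) (c : R) (y : 'I_n -> R).

Definition flat A (a : R) k := if k \in A then a else 0.

Definition spread A c y :=
  [/\ forall k, 0 <= y k, forall k, (k \in A) = (y k != 0) & sum_sq y = #|A|%:R * c].

Definition off_level A c y := [set k in A | y k ^+ 2 != c].

(* Raises [y_i^2 < c] to [c] and lowers [y_j^2 > c] by the same amount; the
   product [y_i y_j] grows because [(c - y_i^2) (y_j^2 - c) >= 0]. *)
Definition rebalance y (i j : 'I_n) c k :=
  if k == i then Num.sqrt c
  else if k == j then Num.sqrt (y i ^+ 2 + y j ^+ 2 - c) else y k.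

Lemma sum_sq_support A y : (forall k, (k \in A) = (y k != 0)) ->
  sum_sq y = \sum_(k in A) y k ^+ 2.
Proof.
move=> yA; rewrite /sum_sq [RHS]big_mkcond; apply: eq_bigr => k _.
by rewrite yA; case: eqP => // ->; rewrite expr0n.
Qed.

Lemma flat_off_level0 A c y : spread A c y -> off_level A c y = set0 ->
  y =1 flat A (Num.sqrt c).
Proof.
move=> [y0 yA _] /setP level k; rewrite /flat.
case kA: (k \in A); last by move: kA; rewrite yA => /negbFE /eqP.
by move: (level k); rewrite !inE kA /= => /negbFE /eqP <-; rewrite sqrtr_sqr ger0_norm.
Qed.

Section Rebalance.
Variables (A : {set 'I_n}) (c : R) (y : 'I_n -> R) (i j : 'I_n).
Hypotheses (yA : spread A c y) (iA : i \in A) (jA : j \in A).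
Hypotheses (yi_lt : y i ^+ 2 < c) (yj_gt : c < y j ^+ 2).

Let e := y i ^+ 2 + y j ^+ 2 - c.

Let ij : i != j.
Proof. by apply: contraTneq yi_lt => ->; rewrite -leNgt ltW. Qed.

Let c_gt0 : 0 < c.
Proof. exact: le_lt_trans (sqr_ge0 _) yi_lt. Qed.

Let e_gt0 : 0 < e.
Proof. by rewrite /e -addrA ltr_wpDl ?sqr_ge0 // subr_gt0. Qed.

Let y' := rebalance y i j c.

Let y'i : y' i = Num.sqrt c.
Proof. by rewrite /y' /rebalance eqxx. Qed.

Let y'j : y' j = Num.sqrt e.
Proof. by rewrite /y' /rebalance eq_sym (negbTE ij) eqxx. Qed.

Let y'_off k : off_pair i j k -> y' k = y k.
Proof. by case/andP => /negbTE ki /negbTE kj; rewrite /y' /rebalance ki kj. Qed.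

Let sqr_pair : y' i ^+ 2 + y' j ^+ 2 = y i ^+ 2 + y j ^+ 2.
Proof. by rewrite y'i y'j !sqr_sqrtr ?ltW // /e; ring. Qed.

Let rebalance_spread : spread A c y'.
Proof.
case: yA => y0 yA' ymass; split.
- move=> k; rewrite /y' /rebalance.
  by case: ifP => _; [|case: ifP => _]; rewrite ?sqrtr_ge0.
- move=> k; have [-> | ki] := eqVneq k i; first by rewrite iA y'i sqrtr_eq0 -ltNge.
  have [-> | kj] := eqVneq k j; first by rewrite jA y'j sqrtr_eq0 -ltNge.
  by rewrite y'_off ?yA' //; apply/andP.
- rewrite -ymass /sum_sq (bigD1 i) //= (bigD1 j) 1?eq_sym //=.
  rewrite [RHS](bigD1 i) //= [in RHS](bigD1 j) 1?eq_sym //= !addrA sqr_pair.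
  by congr (_ + _); apply: eq_bigr => k /y'_off ->.
Qed.

Let chaos_sum_rebalance q : chaos_sum y q <= chaos_sum y' q.
Proof.
case: yA => y0 _ _.
apply: (chaos_sum_pair_mono q ij y0 y'_off sqr_pair (mulr_ge0 (y0 i) (y0 j))).
rewrite y'i y'j -sqrtrM ?(ltW c_gt0) //.
rewrite -(ger0_norm (mulr_ge0 (y0 i) (y0 j))) -sqrtr_sqr ler_sqrt; last first.
  by rewrite mulr_ge0 ?ltW.
rewrite -subr_ge0.
have -> : c * e - (y i * y j) ^+ 2 = (c - y i ^+ 2) * (y j ^+ 2 - c) by rewrite /e; ring.
by rewrite mulr_ge0 // subr_ge0 ltW.
Qed.

Let off_level_rebalance : (#|off_level A c y'| < #|off_level A c y|)%N.
Proof.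
apply: proper_card; apply/properP; split.
  apply/subsetP => k; rewrite !inE => /andP [kA yk]; rewrite kA /=.
  have [ki | ki] := eqVneq k i; first by move: yk; rewrite ki y'i sqr_sqrtr ?ltW ?eqxx.
  have [-> | kj] := eqVneq k j; first by rewrite gt_eqF.
  by rewrite -y'_off //; apply/andP.
exists i; first by rewrite !inE iA (lt_eqF yi_lt).
by rewrite !inE negb_and y'i sqr_sqrtr ?eqxx ?orbT // ltW.
Qed.

Lemma rebalance_step q : [/\ spread A c y', chaos_sum y q <= chaos_sum y' q
  & (#|off_level A c y'| < #|off_level A c y|)%N].
Proof.
by split; [exact: rebalance_spread | exact: chaos_sum_rebalance
  | exact: off_level_rebalance].
Qed.

End Rebalance.

Lemma chaos_sum_le_flat A c y q : spread A c y ->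
  chaos_sum y q <= chaos_sum (flat A (Num.sqrt c)) q.
Proof.
have [m] := ubnP #|off_level A c y|; elim: m y => // m IH y; rewrite ltnS => bad_m yA.
case: (set_0Vmem (off_level A c y)) => [level | [k0]].
  by rewrite (eq_chaos_sum _ (flat_off_level0 yA level)).
rewrite inE => /andP [k0A]; rewrite -subr_eq0 => yk0.
have [yA0 yA' ymass] := yA.
have sum_dev : \sum_(k in A) (y k ^+ 2 - c) = 0.
  by rewrite sumrB -(sum_sq_support yA') ymass sumr_const mulr_natl subrr.
have [[i iA]] := sum_eq0_neg_pos sum_dev k0A yk0.
rewrite subr_lt0 => yi [j jA]; rewrite subr_gt0 => yj.
have [y'A y_le_y' bad_y'] := rebalance_step yA iA jA yi yj q.
by apply: le_trans y_le_y' (IH _ (leq_trans bad_y' bad_m) y'A).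
Qed.

End Flattening.

Section FlatVectors.
Variable R : realType.

Definition flat_moment K (c : R) q :=
  \sum_(m < K.+1) 'C(K, m)%:R * (c * ((2 * m%:R - K%:R) ^+ 2 - K%:R)) ^+ q.

Lemma sign_sum_flat n (A : {set 'I_n}) (a : R) s :
  sign_sum_on predT (flat A a) s = a * (2 * #|[set k in A | s k]|%:R - #|A|%:R).
Proof.
have -> : sign_sum_on predT (flat A a) s = \sum_(k in A) a * rsign R (s k).
  rewrite [RHS]big_mkcond; apply: eq_bigr => k _.
  by rewrite /flat; case: ifP; rewrite ?mul0r.
rewrite -mulr_sumr; congr (_ * _).
have -> : \sum_(k in A) rsign R (s k) = \sum_(k in A) (2 * (s k : nat)%:R - 1).
  by apply: eq_bigr => k _; case: (s k); rewrite /rsign /=; ring.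
rewrite sumrB -mulr_sumr sumr_const -natr_sum; congr (2 * _%:R - _).
rewrite -sum1_card big_mkcond [RHS]big_mkcond /=; apply: eq_bigr => k _.
by rewrite inE; case: (k \in A); case: (s k).
Qed.

Lemma sum_sq_flat n (A : {set 'I_n}) (a : R) : sum_sq (flat A a) = #|A|%:R * a ^+ 2.
Proof.
rewrite /sum_sq /flat (eq_bigr (fun k => if k \in A then a ^+ 2 else 0)).
  by rewrite -big_mkcond sumr_const mulr_natl.
by move=> k _; case: ifP; rewrite ?expr0n.
Qed.

Lemma chaos_sum_flat n (A : {set 'I_n}) (a : R) q :
  chaos_sum (flat A a) q = 2 ^+ (n - #|A|) * flat_moment #|A| (a ^+ 2) q.
Proof.
rewrite /flat_moment -(sum_signs_card _ (fun m : nat =>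
  (a ^+ 2 * ((2 * m%:R - #|A|%:R) ^+ 2 - #|A|%:R)) ^+ q)).
apply: eq_bigr => s _.
by rewrite sign_sum_flat sum_sq_flat; congr (_ ^+ _); ring.
Qed.

End FlatVectors.

Section SparseVectors.
Variables (R : realType) (n : nat) (x : 'rV[R]_n).
Local Notation K := (l0norm x).
Local Notation c := (l2norm x ^+ 2 / K%:R).

Lemma l0norm_gt0 : x != 0 -> (0 < K)%N.
Proof.
apply: contraNT; rewrite -leqNgt leqn0 => /eqP/cards0_eq/setP supp0.
apply/eqP/matrixP => i k; rewrite ord1 mxE.
by move: (supp0 k); rewrite !inE => /negbFE/eqP.
Qed.

Lemma Rq_xstar q : Rq (xstar x) q = (2 ^+ K)^-1 * flat_moment K c q.
Proof.
rewrite Rq_chaos_sum (@eq_chaos_sum _ _ _ (flat [set: 'I_K] (l2norm x / Num.sqrt K%:R))).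
  rewrite chaos_sum_flat cardsT card_ord subnn mul1r.
  by rewrite expr_div_n (sqr_sqrtr (ler0n _ K)).
by move=> k; rewrite /flat mxE in_setT.
Qed.

Lemma Rq_le_flat_moment q : Rq x q <= (2 ^+ K)^-1 * flat_moment K c q.
Proof.
set A := [set k | x 0 k != 0].
have supp_abs k : (k \in A) = (`|x 0 k| != 0) by rewrite inE normr_eq0.
have mass : sum_sq (fun k => `|x 0 k|) = #|A|%:R * c.
  have [A0 | A_gt0] := posnP #|A|.
    by rewrite A0 mul0r (sum_sq_support supp_abs) (cards0_eq A0) big_set0.
  rewrite mulrC divfK ?pnatr_eq0 -?lt0n // sqr_sqrtr.
    by apply: eq_bigr => k _; rewrite real_normK ?num_real.
  by apply: sumr_ge0 => k _; apply: sqr_ge0.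
have spread_x : spread A c (fun k => `|x 0 k|) by split.
rewrite Rq_chaos_sum chaos_sum_abs.
apply: le_trans (ler_wpM2l _ (chaos_sum_le_flat q spread_x)) _.
  by rewrite invr_ge0 exprn_ge0.
have K_le_n : (K <= n)%N by rewrite -[n in (_ <= n)%N]card_ord max_card.
rewrite chaos_sum_flat sqr_sqrtr ?divr_ge0 ?sqr_ge0 //.
rewrite (exprB K_le_n) ?unitfE ?pnatr_eq0 //.
by rewrite -mulrA mulKf ?expf_neq0 ?pnatr_eq0.
Qed.

End SparseVectors.

Lemma Bbar_sqr_sub1 (R : realType) K m : (0 < K)%N ->
  Bbar R K m ^+ 2 - 1 = ((2 * m%:R - K%:R) ^+ 2 - K%:R) / K%:R.
Proof.
move=> K_gt0; have K_neq0 : K%:R != 0 :> R by rewrite pnatr_eq0 -lt0n.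
rewrite /Bbar expr_div_n sqr_sqrtr ?divr_ge0 //; field.
by rewrite K_neq0.
Qed.

Lemma flat_moment_binomE (R : realType) K (T : R) q : (0 < K)%N ->
  (2 ^+ K)^-1 * flat_moment K (T / K%:R) q =
  T ^+ q * binomE K (fun k => (Bbar R K k ^+ 2 - 1) ^+ q).
Proof.
move=> K_gt0; rewrite /binomE /flat_moment !mulr_sumr; apply: eq_bigr => m _.
rewrite Bbar_sqr_sub1 // [T / _ * _]mulrAC -mulrA exprMn.
by set E := (_ / K%:R) ^+ q; ring.
Qed.

Theorem theorem3 (R : realType) (n : nat) (x : 'rV[R]_n) (hx : x != 0)
  (q : nat) (hq : (0 < q)%N) :
  Rq x q <= Rq (xstar x) q /\
  Rq (xstar x) q =
    l2norm x ^+ (2 * q) *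
    binomE (l0norm x) (fun k => (Bbar R (l0norm x) k ^+ 2 - 1) ^+ q).
Proof.
rewrite Rq_xstar; split; first exact: Rq_le_flat_moment.
by rewrite flat_moment_binomE ?l0norm_gt0 // exprM.
Qed.
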